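(* Let $0<\nu<1$, let $\chi$ be a kernel with $M_\nu(\chi)<\infty$, and let $f\in\mathcal{C}(\mathbb{R}^+)$. Then for all sufficiently large $w>0$ and every $t\in\mathbb{R}^+$, $$|(S_w^\chi f)(t)-f(t)|\le \omega(f,w^{-\nu})\,[M_\nu(\chi)+2M_0(\chi)]+2^{\nu+1}\|f\|_\infty M_\nu(\chi)\,w^{-\nu}.$$
   Context: Let $\mathbb{R}^+=(0,\infty)$. For $\chi:\mathbb{R}^+\to\mathbb{R}$ and $\nu\ge 0$ set $M_\nu(\chi):=\sup_{u>0}\sum_{k\in\mathbb{Z}}|\chi(e^{-k}u)|\,|k-\log u|^\nu$ (with $|k-\log u|^0:=1$). A kernel is a function $\chi:\mathbb{R}^+\to\mathbb{R}$ such that (K1) $\sum_{k\in\mathbb{Z}}\chi(e^{-k}u)=1$ for every $u\in\mathbb{R}^+$, and (K2) $M_0(\chi)<\infty$ and $M_\nu(\chi)<\infty$ for some $\nu>0$. For a bounded $f:\mathbb{R}^+\to\mathbb{R}$, $w>0$ and $t\in\mathbb{R}^+$, the exponential sampling series is $(S_w^\chi f)(t)=\sum_{k\in\mathbb{Z}}\chi(e^{-k}t^w)\,f(e^{k/w})$. $\|f\|_\infty=\sup_{x>0}|f(x)|$. $\mathcal{C}(\mathbb{R}^+)$ is the space of bounded functions $f:\mathbb{R}^+\to\mathbb{R}$ that are log-uniformly continuous: for every $\epsilon>0$ there is $\delta>0$ with $|f(p)-f(q)|<\epsilon$ whenever $|\log p-\log q|<\delta$. The logarithmic modulus of continuity is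 $\omega(f,\delta):=\sup\{|f(p)-f(q)|: p,q\in\mathbb{R}^+,\ |\log p-\log q|\le\delta\}$ for $\delta>0$. *)

From Stdlib Require Import Reals Lra ZArith.
From Coquelicot Require Import Coquelicot.
Open Scope R_scope.

(* |x|^nu for x >= 0, with the convention |x|^0 := 1 (and 0^nu = 0 for nu > 0). *)
Definition pw (x nu : R) : R :=
  if Req_EM_T nu 0 then 1 else if Rlt_dec 0 x then Rpower x nu else 0.

(* symmetric partial sum  sum_{k=-N}^{N} a k *)
Definition sumZ_partial (a : Z -> R) (N : nat) : R :=
  sum_n (fun n : nat => a (Z.of_nat n - Z.of_nat N)%Z) (2 * N)%nat.

Definition sumZ (a : Z -> R) : Rbar := Lim_seq (sumZ_partial a).

Definition M_nu (chi : R -> R) (nu : R) : Rbar :=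
  Rbar_lub (fun x : Rbar => exists u : R, 0 < u /\
     x = sumZ (fun k => Rabs (chi (exp (- IZR k) * u)) * pw (Rabs (IZR k - ln u)) nu)).

Definition is_kernel (chi : R -> R) : Prop :=
  (forall u : R, 0 < u -> is_lim_seq (sumZ_partial (fun k => chi (exp (- IZR k) * u))) 1)
  /\ is_finite (M_nu chi 0)
  /\ (exists nu : R, 0 < nu /\ is_finite (M_nu chi nu)).

Definition S_w (chi : R -> R) (w : R) (f : R -> R) (t : R) : R :=
  real (Lim_seq (sumZ_partial
    (fun k => chi (exp (- IZR k) * Rpower t w) * f (exp (IZR k / w))))).

Definition bounded_pos (f : R -> R) : Prop :=
  exists B : R, forall x : R, 0 < x -> Rabs (f x) <= B.

Definition sup_norm (f : R -> R) : R :=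
  real (Lub_Rbar (fun y => exists x : R, 0 < x /\ y = Rabs (f x))).

Definition in_C (f : R -> R) : Prop :=
  bounded_pos f /\
  (forall eps : R, 0 < eps -> exists delta : R, 0 < delta /\
     forall p q : R, 0 < p -> 0 < q -> Rabs (ln p - ln q) < delta ->
       Rabs (f p - f q) < eps).

Definition omega (f : R -> R) (delta : R) : R :=
  real (Lub_Rbar (fun y => exists p q : R, 0 < p /\ 0 < q /\
          Rabs (ln p - ln q) <= delta /\ y = Rabs (f p - f q))).

From Stdlib Require Import Reals Lra Lia ZArith.
From Coquelicot Require Import Coquelicot.
Open Scope R_scope.

(* Write d = w^-nu, u = t^w and x_k = |k - log u|, so that the sample point
   e^(k/w) lies at logarithmic distance x_k / w from t.  The argument is:
   1. a pointwise estimate for each sample (lemma [sample_error]):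
        |f(e^(k/w)) - f(t)| <= omega(f,d) (1 + x_k^nu) + 2 ||f|| d x_k^nu,
      obtained from omega(f, lam d) <= (1 + lam) omega(f,d) when x_k < w
      (then x_k / w <= x_k^nu d), and from the trivial bound 2 ||f|| when
      x_k >= w (then 1 <= x_k^nu d);
   2. multiplying by |chi(e^-k u)|, summing, and using (K1) to write f(t) as
      the limit of f(t) sum_k chi(e^-k u), each symmetric partial sum of
      S_w f (t) - f(t) sum_k chi(e^-k u) is bounded by the moments M_0, M_nu;
   3. the bound passes to the limit (lemma [Lim_seq_close]), and the constant
      2 is enlarged to 2^(nu+1).
   Of the hypotheses on f only boundedness is used: the right-hand side is
   stated through omega(f, w^-nu), so log-uniform continuity is only needed
   to make it tend to 0. *)

Lemma sumZ_partial_R (a : Z -> R) (N : nat) :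
  sumZ_partial a N = sum_f_R0 (fun n => a (Z.of_nat n - Z.of_nat N)%Z) (2 * N).
Proof. apply sum_n_Reals. Qed.

Lemma sumZ_partial_succ (a : Z -> R) (N : nat) :
  sumZ_partial a (S N) =
  sumZ_partial a N + a (- Z.of_nat (S N))%Z + a (Z.of_nat (S N)).
Proof.
  rewrite !sumZ_partial_R.
  replace (2 * S N)%nat with (S (S (2 * N))) by lia.
  rewrite decomp_sum by lia; cbn [pred]; rewrite tech5.
  rewrite (sum_eq (fun i => a (Z.of_nat (S i) - Z.of_nat (S N))%Z)
                  (fun n => a (Z.of_nat n - Z.of_nat N)%Z)).
  2: { intros i _; f_equal; lia. }
  replace (Z.of_nat 0 - Z.of_nat (S N))%Z with (- Z.of_nat (S N))%Z by lia.
  replace (Z.of_nat (S (S (2 * N))) - Z.of_nat (S N))%Z with (Z.of_nat (S N)) by lia.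
  ring.
Qed.

Lemma sumZ_partial_ge0 (a : Z -> R) (N : nat) :
  (forall k, 0 <= a k) -> 0 <= sumZ_partial a N.
Proof. intros Ha; rewrite sumZ_partial_R; apply cond_pos_sum; auto. Qed.

Lemma sumZ_partial_mono (a : Z -> R) (N m : nat) :
  (forall k, 0 <= a k) -> sumZ_partial a N <= sumZ_partial a (m + N).
Proof.
  intros Ha; induction m as [|m IH]; [simpl; lra|].
  change (S m + N)%nat with (S (m + N)); rewrite sumZ_partial_succ.
  pose proof (Ha (- Z.of_nat (S (m + N)))%Z); pose proof (Ha (Z.of_nat (S (m + N)))).
  lra.
Qed.

Lemma sumZ_partial_lin (a b : Z -> R) (alpha beta : R) (N : nat) :
  sumZ_partial (fun k => alpha * a k + beta * b k) N =
  alpha * sumZ_partial a N + beta * sumZ_partial b N.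
Proof.
  rewrite !sumZ_partial_R, plus_sum, !scal_sum.
  f_equal; apply sum_eq; intros; ring.
Qed.

Lemma sumZ_partial_abs_le (a b : Z -> R) (N : nat) :
  (forall k, Rabs (a k) <= b k) -> Rabs (sumZ_partial a N) <= sumZ_partial b N.
Proof.
  intros Hab; rewrite !sumZ_partial_R.
  eapply Rle_trans; [apply Rsum_abs | apply sum_Rle; auto].
Qed.

Lemma pw_ge0 (x nu : R) : 0 <= pw x nu.
Proof.
  unfold pw; destruct (Req_EM_T nu 0); [lra|].
  destruct (Rlt_dec 0 x); [left; apply exp_pos | lra].
Qed.

(* The convention |x|^0 = 1, which makes M_0 the plain absolute moment. *)
Lemma pw_0 (x : R) : pw x 0 = 1.
Proof. unfold pw; destruct (Req_EM_T 0 0); [reflexivity | lra]. Qed.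

Definition moment_term (chi : R -> R) (nu u : R) (k : Z) : R :=
  Rabs (chi (exp (- IZR k) * u)) * pw (Rabs (IZR k - ln u)) nu.

Lemma moment_term_ge0 (chi : R -> R) (nu u : R) (k : Z) : 0 <= moment_term chi nu u k.
Proof. apply Rmult_le_pos; [apply Rabs_pos | apply pw_ge0]. Qed.

Lemma moment_partial_le (chi : R -> R) (nu u : R) (N : nat) :
  0 < u -> is_finite (M_nu chi nu) ->
  sumZ_partial (moment_term chi nu u) N <= real (M_nu chi nu).
Proof.
  intros Hu Hfin.
  assert (Hsum : Rbar_le (sumZ_partial (moment_term chi nu u) N)
                         (sumZ (moment_term chi nu u))).
  { unfold sumZ; rewrite <- (Lim_seq_const (sumZ_partial _ N)).
    apply Lim_seq_le_loc; exists N; intros n Hn.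
    replace n with ((n - N) + N)%nat by lia.
    apply sumZ_partial_mono, moment_term_ge0. }
  assert (HM : Rbar_le (sumZ (moment_term chi nu u)) (M_nu chi nu)).
  { unfold M_nu, Rbar_lub.
    match goal with |- context [proj1_sig ?L] => destruct (proj2_sig L) as [Hub _] end.
    apply Hub; exists u; split; auto. }
  rewrite <- Hfin in HM.
  destruct (sumZ (moment_term chi nu u)); simpl in *; try contradiction; lra.
Qed.

Lemma moment_ge0 (chi : R -> R) (nu : R) :
  is_finite (M_nu chi nu) -> 0 <= real (M_nu chi nu).
Proof.
  intros Hfin; apply Rle_trans with (sumZ_partial (moment_term chi nu 1) 0).
  - apply sumZ_partial_ge0, moment_term_ge0.
  - apply moment_partial_le; auto; lra.
Qed.

Lemma Lub_Rbar_real_ub (E : R -> Prop) (B y : R) :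
  (forall x, E x -> x <= B) -> E y -> y <= real (Lub_Rbar E).
Proof.
  intros HB Hy; destruct (Lub_Rbar_correct E) as [Hub Hlub].
  specialize (Hub y Hy); specialize (Hlub (Finite B) HB).
  destruct (Lub_Rbar E); simpl in *; try contradiction; lra.
Qed.

Lemma sup_norm_ub (f : R -> R) (x : R) :
  bounded_pos f -> 0 < x -> Rabs (f x) <= sup_norm f.
Proof.
  intros [B HB] Hx; apply (Lub_Rbar_real_ub _ B).
  - intros y [z [Hz ->]]; auto.
  - exists x; auto.
Qed.

Lemma sup_norm_ge0 (f : R -> R) : bounded_pos f -> 0 <= sup_norm f.
Proof. intros Hb; pose proof (sup_norm_ub f 1 Hb Rlt_0_1); pose proof (Rabs_pos (f 1)); lra. Qed.

Lemma sup_norm_diff (f : R -> R) (p q : R) :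
  bounded_pos f -> 0 < p -> 0 < q -> Rabs (f p - f q) <= 2 * sup_norm f.
Proof.
  intros Hb Hp Hq; pose proof (sup_norm_ub f p Hb Hp); pose proof (sup_norm_ub f q Hb Hq).
  pose proof (Rabs_triang (f p) (- f q)); rewrite Rabs_Ropp in *; unfold Rminus; lra.
Qed.

Lemma omega_ub (f : R -> R) (d p q : R) :
  bounded_pos f -> 0 < p -> 0 < q -> Rabs (ln p - ln q) <= d ->
  Rabs (f p - f q) <= omega f d.
Proof.
  intros Hb Hp Hq Hd; pose proof Hb as [B HB]; apply (Lub_Rbar_real_ub _ (2 * B)).
  - intros y [p' [q' [Hp' [Hq' [_ ->]]]]].
    pose proof (HB p' Hp'); pose proof (HB q' Hq').
    pose proof (Rabs_triang (f p') (- f q')); rewrite Rabs_Ropp in *; unfold Rminus; lra.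
  - exists p, q; repeat split; auto.
Qed.

Lemma omega_ge0 (f : R -> R) (d : R) : bounded_pos f -> 0 <= d -> 0 <= omega f d.
Proof.
  intros Hb Hd; eapply Rle_trans; [apply Rabs_pos|].
  apply (omega_ub f d 1 1 Hb Rlt_0_1 Rlt_0_1).
  unfold Rminus; rewrite Rplus_opp_r, Rabs_R0; exact Hd.
Qed.

(* Chaining n steps of logarithmic length at most d:
   points at log-distance <= n d have values within n omega(f,d). *)
Lemma omega_chain (f : R -> R) (d : R) (n : nat) :
  bounded_pos f -> 0 <= d -> forall x y : R,
  Rabs (x - y) <= INR n * d -> Rabs (f (exp x) - f (exp y)) <= INR n * omega f d.
Proof.
  intros Hb Hd; induction n as [|n IH]; intros x y Hxy.
  - simpl in *; rewrite Rmult_0_l in *.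
    assert (x = y) as -> by (pose proof (Rabs_pos (x - y));
      apply Rminus_diag_uniq, Rabs_eq_0; lra).
    unfold Rminus; rewrite Rplus_opp_r, Rabs_R0; lra.
  - rewrite S_INR in *; pose proof (pos_INR n) as Hn.
    (* split the segment [x, y] at z, one n+1-th of the way from x *)
    set (q := (x - y) / (INR n + 1)).
    assert (Hq : x - y = q * (INR n + 1)) by (unfold q; field; lra).
    apply Rabs_le_between in Hxy.
    assert (Hqd : - d <= q <= d) by nra.
    assert (Hstep : Rabs (f (exp x) - f (exp (x - q))) <= omega f d).
    { apply omega_ub; auto using exp_pos; rewrite !ln_exp.
      apply Rabs_le_between; lra. }
    assert (Hrest : Rabs (f (exp (x - q)) - f (exp y)) <= INR n * omega f d).
    { apply IH, Rabs_le_between; nra. }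
    pose proof (Rabs_triang (f (exp x) - f (exp (x - q))) (f (exp (x - q)) - f (exp y))).
    replace (f (exp x) - f (exp (x - q)) + (f (exp (x - q)) - f (exp y)))
      with (f (exp x) - f (exp y)) in * by ring.
    lra.
Qed.

Lemma omega_scaled (f : R -> R) (d lam p q : R) :
  bounded_pos f -> 0 < d -> 0 <= lam -> 0 < p -> 0 < q ->
  Rabs (ln p - ln q) <= lam * d -> Rabs (f p - f q) <= (1 + lam) * omega f d.
Proof.
  intros Hb Hd Hlam Hp Hq Hpq.
  destruct (archimed lam) as [Hup1 Hup2].
  assert (Hup : (0 <= up lam)%Z) by (apply le_IZR; lra).
  pose proof (omega_ge0 f d Hb (Rlt_le _ _ Hd)) as Hom.
  pose proof (omega_chain f d (Z.to_nat (up lam)) Hb (Rlt_le _ _ Hd) (ln p) (ln q)) as Hchain.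
  rewrite INR_IZR_INZ, Z2Nat.id, !exp_ln in Hchain by auto.
  apply Rle_trans with (IZR (up lam) * omega f d).
  - apply Hchain; apply Rle_trans with (lam * d); auto; apply Rmult_le_compat_r; lra.
  - apply Rmult_le_compat_r; lra.
Qed.

Lemma exp_monotone (a b : R) : a <= b -> exp a <= exp b.
Proof. intros [H | ->]; [left; apply exp_increasing | right]; auto. Qed.

(* Near samples (x <= w): the relative log-distance x / w, measured in units
   of w^-nu, is at most x^nu (this is where nu <= 1 is needed). *)
Lemma near_weight (nu w x : R) :
  0 < nu <= 1 -> 0 < w -> 0 <= x <= w -> x / w / Rpower w (- nu) <= pw x nu.
Proof.
  intros Hnu Hw Hx; unfold pw; destruct (Req_EM_T nu 0); [lra|].
  destruct (Rlt_dec 0 x) as [Hxpos|]; [|replace x with 0 by lra; unfold Rdiv; lra].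
  unfold Rpower; rewrite <- (exp_ln x) at 1 by auto; rewrite <- (exp_ln w) at 1 by auto.
  replace (exp (ln x) / exp (ln w) / exp (- nu * ln w))
    with (exp (ln x - ln w + nu * ln w)).
  2: { unfold Rminus; rewrite !exp_plus, !exp_Ropp.
       replace (- nu * ln w) with (- (nu * ln w)) by ring; rewrite exp_Ropp.
       field; split; apply Rgt_not_eq, exp_pos. }
  apply exp_monotone; pose proof (ln_le x w Hxpos (proj2 Hx)); nra.
Qed.

Lemma far_weight (nu w x : R) :
  0 < nu -> 0 < w <= x -> 1 <= Rpower w (- nu) * pw x nu.
Proof.
  intros Hnu Hwx; unfold pw; destruct (Req_EM_T nu 0); [lra|].
  destruct (Rlt_dec 0 x); [|lra].
  unfold Rpower; rewrite <- exp_plus, <- exp_0; apply exp_monotone.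
  pose proof (ln_le w x (proj1 Hwx) (proj2 Hwx)); nra.
Qed.

Lemma sample_error (f : R -> R) (nu w x p t : R) :
  bounded_pos f -> 0 < nu < 1 -> 0 < w -> 0 < p -> 0 < t -> 0 <= x ->
  Rabs (ln p - ln t) = x / w ->
  Rabs (f p - f t) <=
  omega f (Rpower w (- nu)) * (1 + pw x nu)
  + 2 * sup_norm f * Rpower w (- nu) * pw x nu.
Proof.
  intros Hb Hnu Hw Hp Ht Hx Hdist.
  set (d := Rpower w (- nu)).
  assert (Hd : 0 < d) by apply exp_pos.
  pose proof (omega_ge0 f d Hb (Rlt_le _ _ Hd)).
  pose proof (sup_norm_ge0 f Hb); pose proof (pw_ge0 x nu).
  destruct (Rlt_or_le x w) as [Hnear | Hfar].
  - set (lam := x / w / d).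
    assert (Hlam : 0 <= lam) by (unfold lam, Rdiv;
      repeat apply Rmult_le_pos; try apply Rlt_le, Rinv_0_lt_compat; lra).
    assert (Hlampw : lam <= pw x nu) by (apply near_weight; lra).
    assert (Hclose : Rabs (f p - f t) <= (1 + lam) * omega f d).
    { apply omega_scaled; auto; rewrite Hdist; right; unfold lam; field; lra. }
    assert (0 <= 2 * sup_norm f * d * pw x nu) by (repeat apply Rmult_le_pos; lra).
    assert ((1 + lam) * omega f d <= (1 + pw x nu) * omega f d)
      by (apply Rmult_le_compat_r; lra).
    lra.
  - pose proof (sup_norm_diff f p t Hb Hp Ht).
    pose proof (far_weight nu w x (proj1 Hnu) (conj Hw Hfar)) as Hweight.
    fold d in Hweight.
    assert (0 <= omega f d * (1 + pw x nu)) by (apply Rmult_le_pos; lra).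
    assert (2 * sup_norm f * 1 <= 2 * sup_norm f * (d * pw x nu))
      by (apply Rmult_le_compat_l; lra).
    lra.
Qed.

Lemma sampling_partial_error (chi f : R -> R) (nu w t : R) (N : nat) :
  bounded_pos f -> 0 < nu < 1 -> 0 < w -> 0 < t ->
  is_finite (M_nu chi 0) -> is_finite (M_nu chi nu) ->
  Rabs (sumZ_partial (fun k => chi (exp (- IZR k) * Rpower t w) * f (exp (IZR k / w))) N
        - f t * sumZ_partial (fun k => chi (exp (- IZR k) * Rpower t w)) N)
  <= omega f (Rpower w (- nu)) * (real (M_nu chi 0) + real (M_nu chi nu))
     + 2 * sup_norm f * Rpower w (- nu) * real (M_nu chi nu).
Proof.
  intros Hb Hnu Hw Ht HM0 HMnu.
  set (u := Rpower t w); set (d := Rpower w (- nu)).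
  assert (Hu : 0 < u) by apply exp_pos.
  assert (Hd : 0 < d) by apply exp_pos.
  pose proof (omega_ge0 f d Hb (Rlt_le _ _ Hd)) as Hom.
  pose proof (sup_norm_ge0 f Hb) as HS.
  assert (Hsplit : forall a b : Z -> R,
    sumZ_partial a N - f t * sumZ_partial b N =
    sumZ_partial (fun k => 1 * a k + - f t * b k) N)
    by (intros; rewrite sumZ_partial_lin; ring).
  rewrite Hsplit.
  eapply Rle_trans.
  - apply sumZ_partial_abs_le with (b := fun k =>
      omega f d * moment_term chi 0 u k
      + (omega f d + 2 * sup_norm f * d) * moment_term chi nu u k).
    intros k; unfold moment_term; rewrite pw_0.
    set (c := chi (exp (- IZR k) * u)).
    replace (1 * (c * f (exp (IZR k / w))) + - f t * c)
      with (c * (f (exp (IZR k / w)) - f t)) by ring.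
    rewrite Rabs_mult; pose proof (Rabs_pos c).
    eapply Rle_trans; [apply Rmult_le_compat_l; [auto|]|].
    + apply (sample_error f nu w (Rabs (IZR k - ln u))); auto using exp_pos, Rabs_pos.
      unfold u, Rpower; rewrite !ln_exp.
      replace (IZR k / w - ln t) with ((IZR k - w * ln t) * / w) by (field; lra).
      rewrite Rabs_mult, (Rabs_pos_eq (/ w)); [reflexivity | left; apply Rinv_0_lt_compat; lra].
    + fold d; right; ring.
  - rewrite sumZ_partial_lin.
    pose proof (moment_partial_le chi 0 u N Hu HM0).
    pose proof (moment_partial_le chi nu u N Hu HMnu).
    assert (omega f d * sumZ_partial (moment_term chi 0 u) N <= omega f d * real (M_nu chi 0))
      by (apply Rmult_le_compat_l; auto).
    assert ((omega f d + 2 * sup_norm f * d) * sumZ_partial (moment_term chi nu u) N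
            <= (omega f d + 2 * sup_norm f * d) * real (M_nu chi nu))
      by (apply Rmult_le_compat_l; auto; nra).
    lra.
Qed.

Lemma Lim_seq_close (A c : nat -> R) (L C : R) :
  is_lim_seq c 1 -> (forall N, Rabs (A N - L * c N) <= C) ->
  Rabs (real (Lim_seq A) - L) <= C.
Proof.
  intros Hc Hclose.
  assert (HLc : is_lim_seq (fun N => L * c N) L).
  { pose proof (is_lim_seq_scal_l c L 1 Hc) as H; simpl in H; rewrite Rmult_1_r in H; exact H. }
  assert (Hup : Rbar_le (Lim_seq A) (L + C)).
  { rewrite <- (is_lim_seq_unique _ _ (is_lim_seq_plus' _ _ _ _ HLc (is_lim_seq_const C))).
    apply Lim_seq_le_loc; exists 0%nat; intros n _.
    pose proof (Hclose n) as H; apply Rabs_le_between in H; lra. }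
  assert (Hlow : Rbar_le (L + - C) (Lim_seq A)).
  { rewrite <- (is_lim_seq_unique _ _ (is_lim_seq_plus' _ _ _ _ HLc (is_lim_seq_const (- C)))).
    apply Lim_seq_le_loc; exists 0%nat; intros n _.
    pose proof (Hclose n) as H; apply Rabs_le_between in H; lra. }
  destruct (Lim_seq A); simpl in *; try contradiction; apply Rabs_le_between; lra.
Qed.

Lemma two_le_pow2 (nu : R) : 0 <= nu -> 2 <= Rpower 2 (nu + 1).
Proof.
  intros Hnu; rewrite Rpower_plus, Rpower_1 by lra.
  pose proof (Rle_Rpower 2 0 nu ltac:(lra) Hnu) as H; rewrite Rpower_O in H by lra.
  lra.
Qed.

Theorem theorem8 (nu : R) (chi f : R -> R) :
  0 < nu < 1 ->
  is_kernel chi ->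
  is_finite (M_nu chi nu) ->
  in_C f ->
  exists w0 : R, forall w : R, w0 < w -> 0 < w -> forall t : R, 0 < t ->
    Rabs (S_w chi w f t - f t) <=
      omega f (Rpower w (- nu)) * (real (M_nu chi nu) + 2 * real (M_nu chi 0))
      + Rpower 2 (nu + 1) * sup_norm f * real (M_nu chi nu) * Rpower w (- nu).
Proof.
  intros Hnu [HK1 [HM0 _]] HMnu [Hb _].
  exists 0; intros w _ Hw t Ht.
  assert (Hu : 0 < Rpower t w) by apply exp_pos.
  assert (Hd : 0 < Rpower w (- nu)) by apply exp_pos.
  eapply Rle_trans.
  { apply (Lim_seq_close _ _ (f t) _ (HK1 _ Hu)); intros N.
    apply (sampling_partial_error chi f nu); auto. }
  pose proof (omega_ge0 f _ Hb (Rlt_le _ _ Hd)).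
  pose proof (sup_norm_ge0 f Hb).
  pose proof (moment_ge0 chi 0 HM0); pose proof (moment_ge0 chi nu HMnu).
  pose proof (two_le_pow2 nu (Rlt_le _ _ (proj1 Hnu))).
  assert (0 <= (Rpower 2 (nu + 1) - 2) * (sup_norm f * real (M_nu chi nu) * Rpower w (- nu)))
    by (apply Rmult_le_pos; [lra | repeat apply Rmult_le_pos; lra]).
  assert (0 <= omega f (Rpower w (- nu)) * real (M_nu chi 0)) by (apply Rmult_le_pos; lra).
  nra.
Qed.
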